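(* Let $G$ be a distribution on $\mathbb{R}$ with Lebesgue density $g$, and let $\theta^g=T^*_{(\alpha,\lambda)}(G)$ be the best fitting parameter. Then the influence function of the minimum $S^*$-divergence functional $T^*_{(\alpha,\lambda)}$ at $G$ is $$IF(y;G,T^*_{(\alpha,\lambda)})=[J_g^*]^{-1}N_g^*(y),$$ where $$N_g^*(y)=A\left[\int (f^*_{\theta^g}(x))^B (g^*(x))^{A-1}\tilde u_{\theta^g}(x)W(x,y,h)\,dx-\int (f^*_{\theta^g})^B (g^* )^A\tilde u_{\theta^g}\right],$$ $$J_g^*=A\int (f^*_{\theta^g})^{1+\alpha}\tilde u_{\theta^g}\tilde u_{\theta^g}^T+\int\big(\tilde i_{\theta^g}-B\,\tilde u_{\theta^g}\tilde u_{\theta^g}^T\big)\big[(g^* )^A-(f^*_{\theta^g})^A\big](f^*_{\theta^g})^B .$$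
   Context: Let $\{F_\theta:\theta\in\Theta\subseteq\mathbb{R}^p\}$ be a parametric family of distributions on $\mathbb{R}$ with Lebesgue densities $f_\theta$. Fix $\alpha\ge 0$, $\lambda\in\mathbb{R}$ and put $A=1+\lambda(1-\alpha)$, $B=\alpha-\lambda(1-\alpha)$ (so $A+B=1+\alpha$). For densities $g,f$ the $S$-divergence is $S_{(\alpha,\lambda)}(g,f)=\frac1A\int f^{1+\alpha}-\frac{1+\alpha}{AB}\int f^Bg^A+\frac1B\int g^{1+\alpha}$ (defined by continuous limits when $A=0$ or $B=0$). Let $W(x,y,h)\ge0$ be a kernel with fixed bandwidth $h>0$ which, for each $y$, is a probability density in $x$. Define the smoothed densities $f^*_\theta(x)=\int W(x,y,h)f_\theta(y)\,dy$ and $g^*(x)=\int W(x,y,h)\,dG(y)$, the smoothed score $\tilde u_\theta(x)=\nabla_\theta\log f^*_\theta(x)$ and $\tilde i_\theta(x)=-\nabla_\theta\tilde u_\theta(x)$. The minimum $S^*$-divergence functional $T^*_{(\alpha,\lambda)}(G)$ is defined by $S_{(\alpha,\lambda)}(g^*,f^*_{T^*_{(\alpha,\lambda)}(G)})=\min_{\theta\in\Theta}S_{(\alpha,\lambda)}(g^*,f^*_\theta)$ and satisfies the estimating equation $\int K(\delta(x))(f^*_\theta(x))^{1+\alpha}\tilde u_\theta(x)\,dx=0$ with $\delta=g^*/f^*_\theta-1$ and $K(\delta)=((\delta+1)^A-1)/A$ ($K(\delta)=\log(1+\delta)$ if $A=0$). The influence function of a functional $T$ at $G$ is $IF(y;G,T)=\frac{\partial}{\partial\epsilon}T(G_\epsilon)\big|_{\epsilon=0}$,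 where $G_\epsilon=(1-\epsilon)G+\epsilon\wedge_y$ and $\wedge_y$ is the point mass at $y$. *)

From HB Require Import structures.
From mathcomp Require Import all_boot all_order all_algebra.
From mathcomp Require Import all_classical all_reals all_analysis.
Set Implicit Arguments. Unset Strict Implicit. Unset Printing Implicit Defensive.
Import Order.TTheory GRing.Theory Num.Theory.
Import numFieldNormedType.Exports.
Local Open Scope classical_set_scope.
Local Open Scope ring_scope.

Section SDiv.
Variable R : realType.

Definition Rint (F : R -> R) : R := Rintegral (@lebesgue_measure R) setT F.

Definition Rintegrable (F : R -> R) : Prop :=
  (@lebesgue_measure R).-integrable setT (EFin \o F).

Definition is_density (F : R -> R) : Prop :=
  measurable_fun setT F /\ (forall x, 0 <= F x) /\
  ((\int[@lebesgue_measure R]_x (F x)%:E)%E = 1%E).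

Definition SA (alpha lambda : R) : R := 1 + lambda * (1 - alpha).
Definition SB (alpha lambda : R) : R := alpha - lambda * (1 - alpha).

(* S-divergence S_(alpha,lambda)(g, f), with the continuous limits at A = 0
   or B = 0. *)
Definition Sdiv (alpha lambda : R) (g f : R -> R) : R :=
  let A := SA alpha lambda in let B := SB alpha lambda in
  if A == 0 then
    Rint (fun x => f x `^ (1 + alpha) * ln (f x / g x))
    - (1 + alpha)^-1 * Rint (fun x => f x `^ (1 + alpha) - g x `^ (1 + alpha))
  else if B == 0 then
    Rint (fun x => g x `^ (1 + alpha) * ln (g x / f x))
    - (1 + alpha)^-1 * Rint (fun x => g x `^ (1 + alpha) - f x `^ (1 + alpha))
  else
    A^-1 * Rint (fun x => f x `^ (1 + alpha))
    - (1 + alpha) / (A * B) * Rint (fun x => f x `^ B * g x `^ A)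
    + B^-1 * Rint (fun x => g x `^ (1 + alpha)).

Definition Kfun (A delta : R) : R :=
  if A == 0 then ln (1 + delta) else ((delta + 1) `^ A - 1) / A.

Definition smooth (W : R -> R -> R -> R) (h : R) (F : R -> R) : R -> R :=
  fun x => Rint (fun y => W x y h * F y).

(* Smoothed density of G_eps = (1-eps) G + eps Dirac_y, where G has density g:
   int W(x,z,h) dG_eps(z) = (1-eps) int W(x,z,h) g(z) dz + eps W(x,y,h). *)
Definition smooth_contam (W : R -> R -> R -> R) (h : R) (g : R -> R)
  (y eps : R) : R -> R :=
  fun x => (1 - eps) * smooth W h g x + eps * W x y h.

Variable p : nat.

Definition vint (F : R -> 'cV[R]_p) : 'cV[R]_p :=
  \col_i Rint (fun x => F x i 0).
Definition mint (F : R -> 'M[R]_p) : 'M[R]_p :=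
  \matrix_(i, j) Rint (fun x => F x i j).

Definition vintegrable (F : R -> 'cV[R]_p) : Prop :=
  forall i, Rintegrable (fun x => F x i 0).
Definition mintegrable (F : R -> 'M[R]_p) : Prop :=
  forall i j, Rintegrable (fun x => F x i j).

Definition ebasis (j : 'I_p) : 'cV[R]_p := delta_mx j 0.

Definition fstar (W : R -> R -> R -> R) (h : R) (f : 'cV[R]_p -> R -> R)
  (theta : 'cV[R]_p) : R -> R := smooth W h (f theta).

Definition ustar W h f (theta : 'cV[R]_p) (x : R) : 'cV[R]_p :=
  \col_j ('D_(ebasis j) (fun t : 'cV[R]_p => ln (fstar W h f t x)) theta).

Definition istar W h f (theta : 'cV[R]_p) (x : R) : 'M[R]_p :=
  - \matrix_(j, k) ('D_(ebasis k) (fun t : 'cV[R]_p => ustar W h f t x j 0) theta).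

Definition influence (c : R -> 'cV[R]_p) : 'cV[R]_p :=
  lim ((fun e => e^-1 *: (c e - c 0)) @ 0^'+).

End SDiv.

Section Functional.
Variables (R : realType) (p : nat) (alpha lambda : R)
  (W : R -> R -> R -> R) (h : R) (f : 'cV[R]_p -> R -> R).

Local Notation A := (SA alpha lambda).
Local Notation B := (SB alpha lambda).
Local Notation fs := (fstar W h f).
Local Notation us := (ustar W h f).
Local Notation iss := (istar W h f).

(* integrand of the estimating equation
   int K(delta(x)) (f*_theta(x))^(1+alpha) u~_theta(x) dx = 0,
   delta = g*/f*_theta - 1, for a smoothed data density gg = g*. *)
Definition est_integrand (gg : R -> R) (theta : 'cV[R]_p) (x : R) : 'cV[R]_p :=
  (Kfun A (gg x / fs theta x - 1) * fs theta x `^ (1 + alpha)) *: us theta x.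

Definition N1_integrand (gg : R -> R) (theta : 'cV[R]_p) (y x : R) : 'cV[R]_p :=
  (fs theta x `^ B * gg x `^ (A - 1) * W x y h) *: us theta x.
Definition N2_integrand (gg : R -> R) (theta : 'cV[R]_p) (x : R) : 'cV[R]_p :=
  (fs theta x `^ B * gg x `^ A) *: us theta x.
Definition Nstar (gg : R -> R) (theta : 'cV[R]_p) (y : R) : 'cV[R]_p :=
  A *: (vint (N1_integrand gg theta y) - vint (N2_integrand gg theta)).

Definition J1_integrand (theta : 'cV[R]_p) (x : R) : 'M[R]_p :=
  fs theta x `^ (1 + alpha) *: (us theta x *m (us theta x)^T).
Definition J2_integrand (gg : R -> R) (theta : 'cV[R]_p) (x : R) : 'M[R]_p :=
  ((gg x `^ A - fs theta x `^ A) * fs theta x `^ B) *: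
    (iss theta x - B *: (us theta x *m (us theta x)^T)).
Definition Jstar (gg : R -> R) (theta : 'cV[R]_p) : 'M[R]_p :=
  A *: mint (J1_integrand theta) + mint (J2_integrand gg theta).

End Functional.

(* For 0 <= e < eps0 the parameter T*(G_e) solves the estimating equation for the
   smoothed density g*_e = (1 - e) g* + e W(., y, h), which is affine in e.  For A <> 0
   the integrand is (g*_e^A f*^B - f*^(1+alpha)) / A times u~, at theta = T*(G_e).
   Differentiating at e = 0 with grad f* = f* u~ and grad u~ = - i~ gives, pointwise
   in x, A^-1 times the difference of the integrand of N*_g(y) and the integrand of
   J*_g applied to IF.  Since the estimating function vanishes identically, the
   integral of this derivative is zero, i.e. J*_g IF = N*_g(y).  For A = 0 the matrix
   J*_g is zero, so it is invertible only when p = 0. *)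

From Pilot Require Import Defs.
From HB Require Import structures.
From mathcomp Require Import all_boot all_order all_algebra.
From mathcomp Require Import all_classical all_reals all_analysis.
From mathcomp Require Import ring lra.
Import Order.TTheory GRing.Theory Num.Theory.
Import numFieldNormedType.Exports.
Local Open Scope classical_set_scope.
Local Open Scope ring_scope.

Section RightDerivative.
Context {R : realType} {V : normedModType R}.

(* The library version [cvg_at_right_left_dnbhs] is stated for metric spaces only. *)
Lemma cvg_at_right_left_dnbhs_normed (f : R -> V) (a : R) (l : V) :
  f x @[x --> a^'+] --> l -> f x @[x --> a^'-] --> l -> f x @[x --> a^'] --> l.
Proof.
move=> /cvgrPdist_le fr /cvgrPdist_le fl; apply/cvgrPdist_le => e e0.
have {fr}[r /= r0 fr] := fr _ e0.
have {fl}[l' /= l0 fl] := fl _ e0.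
near=> t.
have : t != a by near: t; exact: nbhs_dnbhs_neq.
rewrite neq_lt => /orP[ta|lt_at].
- apply: fl => //=; near: t; exists (l' / 2) => //=; first by rewrite divr_gt0.
  move=> z /= + _ => /lt_le_trans; apply.
  by rewrite ler_pdivrMr // ler_pMr // ler1n.
- apply: fr => //=; near: t; exists (r / 2) => //=; first by rewrite divr_gt0.
  move=> z /= + _ => /lt_le_trans; apply.
  by rewrite ler_pdivrMr // ler_pMr // ler1n.
Unshelve. all: by end_near. Qed.

(* A curve known only on [0, +oo) with a right derivative L at 0, continued linearly
   to the left, is derivable at 0; this is how the chain rule reaches e |-> T*(G_e). *)
Definition extend_right (c : R -> V) (L : V) (e : R) : V :=
  if 0 < e then c e else c 0 + e *: L.

Lemma extend_right0 (c : R -> V) (L : V) : extend_right c L 0 = c 0.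
Proof. by rewrite /extend_right ltxx scale0r addr0. Qed.

Lemma is_derive_extend_right {c : R -> V} {L : V} :
  (fun e => e^-1 *: (c e - c 0)) @ 0^'+ --> L ->
  is_derive (0 : R) 1 (extend_right c L) L.
Proof.
move=> cL; set c' := extend_right c L.
have shiftE (e : R) : e *: 1 + 0 = e by rewrite addr0 [LHS]mulr1.
suff q : (fun e : R => e^-1 *: (c' (e *: 1 + 0) - c' 0)) @ 0^' --> L.
  by apply: DeriveDef; [exact: cvgP q | exact: cvg_lim q].
apply: cvg_at_right_left_dnbhs_normed.
- apply: cvg_trans cL; apply: near_eq_cvg; near=> e.
  have e0 : 0 < e by near: e; exact: nbhs_right_gt.
  by rewrite shiftE /c' extend_right0 /extend_right e0.
- apply: cvg_trans (cvg_cst L : (fun _ : R => L) @ 0^'- --> L).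
  apply: near_eq_cvg; near=> e.
  have e0 : e < 0 by near: e; exact: nbhs_left_lt.
  rewrite shiftE /c' extend_right0 /extend_right ltNge (ltW e0) /= addrAC subrr.
  by rewrite add0r scalerA mulVf ?scale1r // lt_eqF.
Unshelve. all: by end_near. Qed.

Lemma is_derive_cvg_at_right {c : R -> V} {dc : V} :
  is_derive (0 : R) 1 c dc -> (fun e => e^-1 *: (c e - c 0)) @ 0^'+ --> dc.
Proof.
case=> dcv <-; apply: cvg_dnbhs_at_right; apply: cvg_trans dcv.
by apply: near_eq_cvg; near=> e; rewrite /= addr0 [e *: 1]mulr1.
Unshelve. all: by end_near. Qed.

Lemma cvg_at_right_quotient_eq0 {F : R -> V} {eps0 : R} {l : V} :
  0 < eps0 -> (forall e, 0 <= e < eps0 -> F e = 0) ->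
  (fun e => e^-1 *: (F e - F 0)) @ 0^'+ --> l -> l = 0.
Proof.
move=> eps0_gt0 F0 Fl; apply: (cvg_unique _ Fl) => //; apply: cvg_near_cst.
near=> e.
have e0 : 0 < e by near: e; exact: nbhs_right_gt.
have e_eps0 : e < eps0 by near: e; exact: nbhs_right_lt.
by rewrite !F0 ?subrr ?scaler0 ?lexx ?(ltW e0).
Unshelve. all: by end_near. Qed.

End RightDerivative.

Section CurveDerivatives.
Context {R : realType}.

Lemma is_derive_comp_diff {U W : normedModType R} {c : R -> U} {F : U -> W}
    {t : R} {dc : U} :
  is_derive t 1 c dc -> differentiable F (c t) ->
  is_derive t 1 (F \o c) ('d F (c t) dc).
Proof.
move=> cdc dF.
have dcd : differentiable c t by apply/derivable1_diffP; case: cdc.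
apply: DeriveDef; first exact/derivable1_diffP/differentiable_comp.
rewrite deriveE; last exact: differentiable_comp.
by rewrite diff_comp //= -(deriveE _ dcd); case: cdc => _ ->.
Qed.

Lemma is_derive_mxP {m n : nat} (M : R -> 'M[R]_(m, n)) (t : R) (dM : 'M[R]_(m, n)) :
  is_derive t 1 M dM <-> forall i j, is_derive t 1 (fun e => M e i j) (dM i j).
Proof.
split=> [[dMt <-] i j|dMij].
  apply: DeriveDef; first exact: (derivable_mxP M t 1).1 dMt i j.
  by rewrite derive_mx // mxE.
have dMt : derivable M t 1 by apply/derivable_mxP => i j; case: (dMij i j).
apply: DeriveDef => //; rewrite derive_mx //.
by apply/matrixP => i j; rewrite mxE; case: (dMij i j).
Qed.

Lemma is_deriveZ_mx {m n : nat} {k : R -> R} {M : R -> 'M[R]_(m, n)} {t dk : R}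
    {dM : 'M[R]_(m, n)} :
  is_derive t 1 k dk -> is_derive t 1 M dM ->
  is_derive t 1 (fun e => k e *: M e) (dk *: M t + k t *: dM).
Proof.
move=> kdk /is_derive_mxP MdM; apply/is_derive_mxP => i j.
have -> : (fun e => (k e *: M e) i j) = k * (fun e => M e i j).
  by apply/funext => e; rewrite mxE.
apply: is_derive_eq (is_deriveM kdk (MdM i j)) _.
by rewrite !mxE /= addrC [_ *: dk]mulrC.
Qed.

End CurveDerivatives.

Section PartialDerivatives.
Context {R : realType} {p : nat}.

Lemma diff_sum_partial {V : normedModType R} (F : 'cV[R]_p -> V) (th L : 'cV[R]_p) :
  differentiable F th -> 'd F th L = \sum_k L k 0 *: 'D_(ebasis R k) F th.
Proof.
move=> dF; rewrite {1}[L]matrix_sum_delta linear_sum; apply: eq_bigr => k _.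
by rewrite big_ord1 linearZ /= -deriveE.
Qed.

Lemma diff_log_gradient (phi : 'cV[R]_p -> R) (th L : 'cV[R]_p) :
  differentiable phi th -> 0 < phi th ->
  'd phi th L =
    phi th * ((\col_k 'D_(ebasis R k) (fun t => ln (phi t)) th)^T *m L) 0 0.
Proof.
move=> dphi phi0.
have [dln dlnE] := is_derive1_ln phi0.
have {}dln : differentiable (@ln R) (phi th) by exact/derivable1_diffP.
have dlnphi : 'd (@ln R \o phi) th L = (phi th)^-1 * 'd phi th L.
  by rewrite diff_comp //= diff1E // derive1E dlnE mulrC.
have -> : 'd phi th L = phi th * 'd (@ln R \o phi) th L.
  by rewrite dlnphi mulrA mulfV ?mul1r // gt_eqF.
rewrite diff_sum_partial; last exact: differentiable_comp.
rewrite !mxE; congr (_ * _); apply: eq_bigr => k _.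
by rewrite !mxE mulrC.
Qed.

Lemma diff_jacobian_col {q : nat} (F : 'cV[R]_p -> 'cV[R]_q) (th L : 'cV[R]_p) :
  differentiable F th ->
  'd F th L = \matrix_(j, k) 'D_(ebasis R k) (fun t => F t j 0) th *m L.
Proof.
move=> dF; rewrite diff_sum_partial //; apply/matrixP => j i.
rewrite (ord1 i) summxE !mxE; apply: eq_bigr => k _.
by rewrite !mxE derive_mx ?mxE 1?mulrC //; exact: diff_derivable.
Qed.

End PartialDerivatives.

Section EstimatingWeight.
Context {R : realType}.

Lemma scaleR_mulE (a b : R) : a *: b = a * b.
Proof. by []. Qed.

Lemma powR_sub1_mul (x r : R) : 0 < x -> x `^ r = x `^ (r - 1) * x.
Proof.
move=> x0; rewrite -[in LHS](subrK 1 r) [LHS]powRD ?powRr1 ?(ltW x0) //.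
by rewrite (gt_eqF x0) implybT.
Qed.

Lemma is_derive_powR_comp {F : R -> R} {t dF : R} (r : R) :
  0 < F t -> is_derive t 1 F dF ->
  is_derive t 1 (fun e => F e `^ r) (r * F t `^ (r - 1) * dF).
Proof. by move=> Ft0 FdF; exact: is_derive1_comp (is_derive1_powR r Ft0) FdF. Qed.

Lemma is_derive_convex_comb (s w t : R) :
  is_derive t 1 (fun e : R => (1 - e) * s + e * w) (w - s).
Proof.
have -> : (fun e : R => (1 - e) * s + e * w) = cst s + (w - s) \*: id.
  by apply/funext => e; change ((1 - e) * s + e * w = s + (w - s) * e); ring.
apply: is_derive_eq (is_deriveD (is_derive_cst _ _ _) (is_deriveZ _ (is_derive_id _ _))) _.
by rewrite add0r [_ *: 1]mulr1.
Qed.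

Definition est_weight (A B al s P : R) : R := (s `^ A * P `^ B - P `^ (1 + al)) / A.

Lemma Kfun_est_weight {A B al s P : R} :
  A != 0 -> A + B = 1 + al -> 0 < s -> 0 < P ->
  Kfun A (s / P - 1) * P `^ (1 + al) = est_weight A B al s P.
Proof.
move=> A0 AB s0 P0; rewrite /Kfun (negbTE A0) subrK /est_weight.
have sA : s `^ A = (s / P) `^ A * P `^ A.
  by rewrite -powRM ?divfK ?gt_eqF ?divr_ge0 ?(ltW s0) ?(ltW P0).
have PAB : P `^ (1 + al) = P `^ A * P `^ B.
  by rewrite -AB powRD // (gt_eqF P0) implybT.
by rewrite sA PAB; field.
Qed.

Lemma is_derive_est_weight (A B al : R) {s P : R -> R} {t ds dP : R} :
  0 < s t -> 0 < P t -> is_derive t 1 s ds -> is_derive t 1 P dP ->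
  is_derive t 1 (fun e => est_weight A B al (s e) (P e))
    ((A * s t `^ (A - 1) * ds * P t `^ B + s t `^ A * (B * P t `^ (B - 1) * dP)
      - (1 + al) * P t `^ al * dP) / A).
Proof.
move=> s0 P0 sds PdP.
have dsA := is_derive_powR_comp A s0 sds.
have dPB := is_derive_powR_comp B P0 PdP.
have dPal := is_derive_powR_comp (1 + al) P0 PdP.
have -> : (fun e => est_weight A B al (s e) (P e)) =
    A^-1 \*: ((fun e => s e `^ A) * (fun e => P e `^ B) - (fun e => P e `^ (1 + al))).
  by apply/funext => e; rewrite /est_weight !fctE /= mulrC.
apply: is_derive_eq (is_deriveZ A^-1 (is_deriveB (is_deriveM dsA dPB) dPal)) _.
rewrite (_ : 1 + al - 1 = al); last by ring.
by rewrite /= !scaleR_mulE; ring.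
Qed.

End EstimatingWeight.

(* [Defs.Rint] is qualified because [Rint] alone is the predicate of integers in reals.v. *)
Section ComponentwiseIntegrals.
Context {R : realType} {p : nat}.
Implicit Types (u v : R -> 'cV[R]_p) (M : R -> 'M[R]_p).

Lemma RintegrableB {F G : R -> R} :
  Rintegrable F -> Rintegrable G -> Rintegrable (fun x => F x - G x).
Proof. exact: integrableB. Qed.

Lemma RintegrableZl (a : R) {F : R -> R} :
  Rintegrable F -> Rintegrable (fun x => a * F x).
Proof.
by move=> iF; apply: (eq_integrable measurableT _ _ _ (integrableZl measurableT a iF)).
Qed.

Lemma Rintegrable_sum (I : Type) (s : seq I) (F : I -> R -> R) :
  (forall k, Rintegrable (F k)) -> Rintegrable (fun x => \sum_(k <- s) F k x).
Proof.
move=> iF.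
apply: (eq_integrable measurableT _ _ _ (integrable_sum measurableT s (fun k _ => iF k))).
by move=> x _; rewrite /= sumEFin.
Qed.

Lemma Rint_sum (I : Type) (s : seq I) (F : I -> R -> R) :
  (forall k, Rintegrable (F k)) ->
  Defs.Rint (fun x => \sum_(k <- s) F k x) = \sum_(k <- s) Defs.Rint (F k).
Proof.
move=> iF; elim: s => [|k s IHs].
  rewrite big_nil /Defs.Rint; under eq_Rintegral do rewrite big_nil.
  by rewrite Rintegral_cst ?mul0r.
rewrite big_cons -IHs /Defs.Rint -RintegralD //; last 2 first.
- exact: iF.
- exact: Rintegrable_sum.
by apply: eq_Rintegral => x _; rewrite big_cons.
Qed.

Lemma vintegrableB {u v} :
  vintegrable u -> vintegrable v -> vintegrable (fun x => u x - v x).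
Proof.
move=> iu iv i.
have -> : (fun x => (u x - v x) i 0) = (fun x => u x i 0 - v x i 0).
  by apply/funext => x; rewrite !mxE.
exact: RintegrableB.
Qed.

Lemma vintB u v :
  vintegrable u -> vintegrable v -> vint (fun x => u x - v x) = vint u - vint v.
Proof.
move=> iu iv; apply/matrixP => i j.
rewrite !mxE /Defs.Rint -RintegralB //; [|exact: iu|exact: iv].
by apply: eq_Rintegral => x _; rewrite !mxE.
Qed.

Lemma vintegrableZ (a : R) {u} : vintegrable u -> vintegrable (fun x => a *: u x).
Proof.
move=> iu i; have -> : (fun x => (a *: u x) i 0) = (fun x => a * u x i 0).
  by apply/funext => x; rewrite !mxE.
exact: RintegrableZl.
Qed.

Lemma vintZ (a : R) u : vintegrable u -> vint (fun x => a *: u x) = a *: vint u.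
Proof.
move=> iu; apply/matrixP => i j.
rewrite !mxE /Defs.Rint -RintegralZl //; last exact: iu.
by apply: eq_Rintegral => x _; rewrite !mxE.
Qed.

Lemma vintegrable_mulmx {M} (L : 'cV[R]_p) :
  mintegrable M -> vintegrable (fun x => M x *m L).
Proof.
move=> iM i; have -> : (fun x => (M x *m L) i 0) = (fun x => \sum_k L k 0 * M x i k).
  by apply/funext => x; rewrite !mxE; apply: eq_bigr => k _; rewrite mulrC.
by apply: Rintegrable_sum => k; exact: RintegrableZl.
Qed.

Lemma vint_mulmx M (L : 'cV[R]_p) :
  mintegrable M -> vint (fun x => M x *m L) = mint M *m L.
Proof.
move=> iM; apply/matrixP => i j; rewrite (ord1 j) !mxE.
have -> : (fun x => (M x *m L) i 0) = (fun x => \sum_k L k 0 * M x i k).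
  by apply/funext => x; rewrite !mxE; apply: eq_bigr => k _; rewrite mulrC.
rewrite Rint_sum => [|k]; last exact: RintegrableZl.
apply: eq_bigr => k _; rewrite !mxE /Defs.Rint RintegralZl //; last exact: iM.
by rewrite mulrC.
Qed.

End ComponentwiseIntegrals.

Lemma unitmx0_all_equal {R : comUnitRingType} {p : nat} :
  (0 : 'M[R]_p) \in unitmx -> forall u v : 'cV[R]_p, u = v.
Proof.
case: p => [_ u v|p]; first by rewrite !flatmx0.
by rewrite unitmxE det0 unitr0.
Qed.

Section SmoothedModel.
Variables (R : realType) (p : nat) (alpha lambda h : R)
  (W : R -> R -> R -> R) (f : 'cV[R]_p -> R -> R).

Local Notation A := (SA alpha lambda).
Local Notation B := (SB alpha lambda).
Local Notation fs := (fstar W h f).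
Local Notation us := (ustar W h f).
Local Notation iss := (istar W h f).

Lemma SA_add_SB : A + B = 1 + alpha.
Proof. by rewrite /SA /SB; ring. Qed.

Lemma diff_fstarE (th L : 'cV[R]_p) (x : R) :
  differentiable (fun t => fs t x) th -> 0 < fs th x ->
  'd (fun t => fs t x) th L = fs th x * ((us th x)^T *m L) 0 0.
Proof. exact: diff_log_gradient. Qed.

Lemma diff_ustarE (th L : 'cV[R]_p) (x : R) :
  differentiable (fun t => us t x) th ->
  'd (fun t => us t x) th L = - (iss th x *m L).
Proof. by move=> dus; rewrite diff_jacobian_col // /istar mulNmx opprK. Qed.

Lemma est_integrandE (gg : R -> R) (th : 'cV[R]_p) (x : R) :
  A != 0 -> 0 < gg x -> 0 < fs th x ->
  est_integrand alpha lambda W h f gg th x =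
    est_weight A B alpha (gg x) (fs th x) *: us th x.
Proof.
by move=> A0 gg0 fs0; rewrite /est_integrand (Kfun_est_weight A0 SA_add_SB).
Qed.

Lemma J1_integrand_mulmx (th L : 'cV[R]_p) (x : R) :
  J1_integrand alpha W h f th x *m L =
    (fs th x `^ (1 + alpha) * ((us th x)^T *m L) 0 0) *: us th x.
Proof.
rewrite /J1_integrand -scalemxAl -mulmxA {1}[_^T *m L]mx11_scalar.
by rewrite mul_mx_scalar scalerA.
Qed.

Lemma J2_integrand_mulmx (gg : R -> R) (th L : 'cV[R]_p) (x : R) :
  J2_integrand alpha lambda W h f gg th x *m L =
    ((gg x `^ A - fs th x `^ A) * fs th x `^ B) *:
      (iss th x *m L - (B * ((us th x)^T *m L) 0 0) *: us th x).
Proof.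
rewrite /J2_integrand -scalemxAl mulmxBl -scalemxAl -mulmxA {1}[_^T *m L]mx11_scalar.
by rewrite mul_mx_scalar scalerA.
Qed.

Lemma est_integrand_derivativeE (gg : R -> R) (th L : 'cV[R]_p) (y x : R) :
  A != 0 -> 0 < gg x -> 0 < fs th x ->
  let s := gg x in let P := fs th x in let c := ((us th x)^T *m L) 0 0 in
  ((A * s `^ (A - 1) * (W x y h - s) * P `^ B + s `^ A * (B * P `^ (B - 1) * (P * c))
      - (1 + alpha) * P `^ alpha * (P * c)) / A) *: us th x
    + est_weight A B alpha s P *: - (iss th x *m L) =
  N1_integrand alpha lambda W h f gg th y x - N2_integrand alpha lambda W h f gg th x
    - J1_integrand alpha W h f th x *m L
    - A^-1 *: (J2_integrand alpha lambda W h f gg th x *m L).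
Proof.
move=> A0 gg0 fs0 s P c.
rewrite J1_integrand_mulmx J2_integrand_mulmx /N1_integrand /N2_integrand /est_weight.
rewrite -/s -/P -/c.
have sA : s `^ A = s `^ (A - 1) * s by exact: powR_sub1_mul.
have PB : P `^ B = P `^ (B - 1) * P by exact: powR_sub1_mul.
have P1al : P `^ (1 + alpha) = P `^ alpha * P.
  by rewrite [LHS]powR_sub1_mul // [1 + alpha - 1]addrAC subrr add0r.
have Pal : P `^ alpha = P `^ A * P `^ (B - 1).
  rewrite -powRD ?(gt_eqF fs0) ?implybT //; congr (_ `^ _).
  by rewrite /SA /SB; ring.
have BE : B = 1 + alpha - A by rewrite -SA_add_SB; ring.
apply/matrixP => i j; rewrite !mxE sA PB P1al Pal BE.
by field.
Qed.

Lemma is_derive_est_integrand_contam (g : R -> R) (y x : R) (c : R -> 'cV[R]_p)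
    (L : 'cV[R]_p) :
  A != 0 -> 0 < smooth W h g x -> 0 < fs (c 0) x -> is_derive (0 : R) 1 c L ->
  differentiable (fun t => fs t x) (c 0) -> differentiable (fun t => us t x) (c 0) ->
  is_derive (0 : R) 1
    (fun e => est_weight A B alpha (smooth_contam W h g y e x) (fs (c e) x) *: us (c e) x)
    (N1_integrand alpha lambda W h f (smooth W h g) (c 0) y x
     - N2_integrand alpha lambda W h f (smooth W h g) (c 0) x
     - J1_integrand alpha W h f (c 0) x *m L
     - A^-1 *: (J2_integrand alpha lambda W h f (smooth W h g) (c 0) x *m L)).
Proof.
move=> A0 s0 P0 cL dfs dus.
have gs0 : smooth_contam W h g y 0 x = smooth W h g x.
  by rewrite /smooth_contam subr0 mul1r mul0r addr0.
have ds : is_derive (0 : R) 1 (fun e => smooth_contam W h g y e x)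
    (W x y h - smooth W h g x) by exact: is_derive_convex_comb.
have dP := is_derive_comp_diff cL dfs.
have dU := is_derive_comp_diff cL dus.
rewrite diff_fstarE // in dP; rewrite diff_ustarE // in dU.
have := is_deriveZ_mx (is_derive_est_weight A B alpha _ _ ds dP) dU.
rewrite /= gs0 -est_integrand_derivativeE //; apply; rewrite ?gs0 //.
Qed.

Lemma Jstar_SA0 (gg : R -> R) (th : 'cV[R]_p) :
  A = 0 -> Jstar alpha lambda W h f gg th = 0.
Proof.
move=> A0; rewrite /Jstar A0 scale0r add0r; apply/matrixP => i j; rewrite !mxE.
rewrite /Defs.Rint.
under eq_Rintegral do rewrite /J2_integrand A0 !powRr0 subrr mul0r scale0r mxE.
by rewrite Rintegral_cst ?mul0r.
Qed.

Lemma smooth_contam_gt0 (g : R -> R) (y e x : R) :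
  0 < smooth W h g x -> 0 <= W x y h -> 0 <= e < 1 ->
  0 < smooth_contam W h g y e x.
Proof.
move=> s0 w0 /andP[e0 e1]; rewrite /smooth_contam.
have : 0 < (1 - e) * smooth W h g x by rewrite mulr_gt0 // subr_gt0.
have : 0 <= e * W x y h by rewrite mulr_ge0.
lra.
Qed.

Lemma Jstar_mulmx_Nstar (gg : R -> R) (th L : 'cV[R]_p) (y : R) :
  A != 0 ->
  vintegrable (N1_integrand alpha lambda W h f gg th y) ->
  vintegrable (N2_integrand alpha lambda W h f gg th) ->
  mintegrable (J1_integrand alpha W h f th) ->
  mintegrable (J2_integrand alpha lambda W h f gg th) ->
  vint (fun x => N1_integrand alpha lambda W h f gg th y x
                 - N2_integrand alpha lambda W h f gg th x
                 - J1_integrand alpha W h f th x *m L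
                 - A^-1 *: (J2_integrand alpha lambda W h f gg th x *m L)) = 0 ->
  Jstar alpha lambda W h f gg th *m L = Nstar alpha lambda W h f gg th y.
Proof.
move=> A0 iN1 iN2 iJ1 iJ2.
have iN := vintegrableB iN1 iN2.
have iJ1L := vintegrable_mulmx L iJ1; have iJ2L := vintegrable_mulmx L iJ2.
have iNJ1 := vintegrableB iN iJ1L; have iJ2LZ := vintegrableZ A^-1 iJ2L.
rewrite !vintB ?vintZ ?vint_mulmx //.
move/eqP; rewrite subr_eq0 subr_eq => /eqP NE.
rewrite /Jstar /Nstar mulmxDl -scalemxAl NE scalerDr scalerA mulfV // scale1r.
by rewrite addrC.
Qed.

Lemma cvg_est_integrand_contam (g : R -> R) (y x eps0 : R) (c : R -> 'cV[R]_p)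
    (L : 'cV[R]_p) :
  A != 0 -> 0 < eps0 -> 0 < smooth W h g x -> 0 <= W x y h ->
  (forall e, 0 <= e < eps0 -> 0 < fs (c e) x) ->
  (fun e => e^-1 *: (c e - c 0)) @ 0^'+ --> L ->
  differentiable (fun t => fs t x) (c 0) -> differentiable (fun t => us t x) (c 0) ->
  (fun e => e^-1 *: (est_integrand alpha lambda W h f (smooth_contam W h g y e) (c e) x
                     - est_integrand alpha lambda W h f (smooth_contam W h g y 0) (c 0) x))
    @ 0^'+ -->
  N1_integrand alpha lambda W h f (smooth W h g) (c 0) y x
    - N2_integrand alpha lambda W h f (smooth W h g) (c 0) x
    - J1_integrand alpha W h f (c 0) x *m L
    - A^-1 *: (J2_integrand alpha lambda W h f (smooth W h g) (c 0) x *m L).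
Proof.
move=> A0 eps0_gt0 s0 w0 fs_gt0 cL dfs dus.
have dc := is_derive_extend_right cL.
have fs0 : 0 < fs (extend_right c L 0) x.
  by rewrite extend_right0 fs_gt0 // lexx eps0_gt0.
rewrite -(extend_right0 c L) in dfs dus *.
have := is_derive_cvg_at_right
  (is_derive_est_integrand_contam g y x _ L A0 s0 fs0 dc dfs dus).
apply: cvg_trans; apply: near_eq_cvg; near=> e.
have e0 : 0 < e by near: e; exact: nbhs_right_gt.
have e_eps0 : e < eps0 by near: e; exact: nbhs_right_lt.
have e1 : e < 1 by near: e; apply: nbhs_right_lt; exact: ltr01.
rewrite /= extend_right0 /extend_right e0.
have se : 0 < smooth_contam W h g y e x.
  by apply: smooth_contam_gt0 => //; rewrite (ltW e0) e1.
have s0' : 0 < smooth_contam W h g y 0 x.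
  by apply: smooth_contam_gt0 => //; rewrite lexx ltr01.
have fse : 0 < fs (c e) x by apply: fs_gt0; rewrite (ltW e0) e_eps0.
have fs0' : 0 < fs (c 0) x by apply: fs_gt0; rewrite lexx eps0_gt0.
by rewrite !est_integrandE.
Unshelve. all: by end_near. Qed.

End SmoothedModel.

Theorem theorem1 (R : realType) (p : nat) (alpha lambda h : R)
  (W : R -> R -> R -> R) (f : 'cV[R]_p -> R -> R) (Theta : set 'cV[R]_p)
  (g : R -> R) (T : (R -> R) -> 'cV[R]_p) (y eps0 : R) :
  0 <= alpha -> 0 < h ->
  (* kernel: nonnegative, a probability density in x for each y *)
  (forall x z, 0 <= W x z h) ->
  (forall z, is_density (fun x => W x z h)) ->
  (* parametric family of densities on an open parameter set *)
  open Theta ->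
  (forall theta, Theta theta -> is_density (f theta)) ->
  (* G has Lebesgue density g *)
  is_density g ->
  (* positivity of the smoothed densities *)
  (forall theta x, Theta theta -> 0 < fstar W h f theta x) ->
  (forall x, 0 < smooth W h g x) ->
  0 < eps0 ->
  let gs := smooth_contam W h g y in     (* gs e = smoothed density of G_e *)
  let thg := T (smooth W h g) in         (* theta^g = T*(G) *)
  (* T*(G_e) is a minimum S*-divergence parameter, for 0 <= e < eps0 *)
  (forall e, 0 <= e < eps0 -> Theta (T (gs e))) ->
  (forall e, 0 <= e < eps0 -> forall theta, Theta theta ->
     Sdiv alpha lambda (gs e) (fstar W h f (T (gs e)))
       <= Sdiv alpha lambda (gs e) (fstar W h f theta)) ->
  (* ... and solves the estimating equation *)
  (forall e, 0 <= e < eps0 ->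
     vintegrable (est_integrand alpha lambda W h f (gs e) (T (gs e))) /\
     vint (est_integrand alpha lambda W h f (gs e) (T (gs e))) = 0) ->
  (* smoothness of the model in theta *)
  (forall x theta, Theta theta ->
     differentiable (fun t : 'cV[R]_p => fstar W h f t x) theta) ->
  (forall x, differentiable (fun t : 'cV[R]_p => ustar W h f t x) thg) ->
  (* the influence function exists (right derivative in e at 0) *)
  cvg ((fun e => e^-1 *: (T (gs e) - T (gs 0))) @ 0^'+) ->
  (* differentiation in e under the integral sign is permitted *)
  (exists D : R -> 'cV[R]_p,
     vintegrable D /\
     (forall x,
       (fun e => e^-1 *: (est_integrand alpha lambda W h f (gs e) (T (gs e)) x
                          - est_integrand alpha lambda W h f (gs 0) (T (gs 0)) x))
         @ 0^'+ --> D x) /\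
     ((fun e => e^-1 *: (vint (est_integrand alpha lambda W h f (gs e) (T (gs e)))
                         - vint (est_integrand alpha lambda W h f (gs 0) (T (gs 0)))))
         @ 0^'+ --> vint D)) ->
  (* the integrals defining N*_g(y) and J*_g exist, and J*_g is invertible *)
  vintegrable (N1_integrand alpha lambda W h f (smooth W h g) thg y) ->
  vintegrable (N2_integrand alpha lambda W h f (smooth W h g) thg) ->
  mintegrable (J1_integrand alpha W h f thg) ->
  mintegrable (J2_integrand alpha lambda W h f (smooth W h g) thg) ->
  Jstar alpha lambda W h f (smooth W h g) thg \in unitmx ->
  influence (fun e => T (gs e)) =
    invmx (Jstar alpha lambda W h f (smooth W h g) thg)
      *m Nstar alpha lambda W h f (smooth W h g) thg y.
Proof.
move=> _ _ W_ge0 _ _ _ _ fs_gt0 s_gt0 eps0_gt0 gs thg T_in _ est0 dfs dus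
  T_cvg [D [iD [D_cvg vintD_cvg]]] iN1 iN2 iJ1 iJ2 J_unit.
set L := influence _; have TL : _ @ 0^'+ --> L := T_cvg.
have gs0 : gs 0 = smooth W h g.
  by apply/funext => x; rewrite /gs /smooth_contam subr0 mul1r mul0r addr0.
have in0 : 0 <= (0 : R) < eps0 by rewrite lexx eps0_gt0.
have T_in0 : Theta (T (gs 0)) := T_in 0 in0.
have [A0|A0] := eqVneq (SA alpha lambda) 0.
  by move: J_unit; rewrite Jstar_SA0 // => /unitmx0_all_equal; apply.
suff JL : Jstar alpha lambda W h f (smooth W h g) thg *m L =
          Nstar alpha lambda W h f (smooth W h g) thg y by rewrite -JL mulKmx.
have thgE : thg = T (gs 0) by rewrite gs0.
have DE : D = fun x => N1_integrand alpha lambda W h f (smooth W h g) thg y x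
    - N2_integrand alpha lambda W h f (smooth W h g) thg x
    - J1_integrand alpha W h f thg x *m L
    - (SA alpha lambda)^-1 *: (J2_integrand alpha lambda W h f (smooth W h g) thg x *m L).
  apply/funext => x; apply: (cvg_unique _ (D_cvg x)) => //; rewrite thgE.
  apply: (@cvg_est_integrand_contam _ _ _ _ _ _ _ g y x eps0 (fun e => T (gs e))) => //.
  - by move=> e e_itv; apply/fs_gt0/T_in.
  - exact: dfs.
  - by rewrite -thgE.
have vintD0 := cvg_at_right_quotient_eq0 eps0_gt0 (fun e e_in => (est0 e e_in).2)
  vintD_cvg.
by apply: Jstar_mulmx_Nstar => //; rewrite -DE.
Qed.
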